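(* Let $\mathcal{S}$ be finite, $\Pi$ irreducible stochastic on $\mathcal{S}$, $\kappa(x,y):=\pi_{xy}-\mathbf{1}_{x=y}$, $\mathcal{K}=\Pi-\mathrm{I}$, $Q=(q(y))$ the invariant distribution, and assume detailed balance $q(y)\kappa(y,z)=q(z)\kappa(z,y)$ for all $y,z$. Let $\boldsymbol{\ell}_t=\ell(t,\cdot)$, $\ell(t,y):=p(t,y)/q(y)$, where $p(t,\cdot)$ is the time-$t$ law of the chain with generator $\mathcal{K}$ started from a positive initial distribution. Fix $t_0>0$, $\varepsilon>0$, a continuous curve $(\psi_t)_{t_0\le t<t_0+\varepsilon}$ of functions $\mathcal{S}\to\mathbb{R}$, and let $\ell^\psi$ solve $\ell^\psi_{t_0}=\boldsymbol{\ell}_{t_0}$, $\partial_t\ell^\psi(t,x)=\sum_y\widehat\kappa(x,y)\psi(t,y)$ with $\widehat\kappa(x,y):=q(y)\kappa(y,x)/q(x)$. Then for every $t\in[t_0,t_0+\varepsilon)$, $$\lim_{h\downarrow0}\frac1h\big\|\boldsymbol{\ell}_{t+h}-\boldsymbol{\ell}_t\big\|_{\mathbb{H}^{-1}(\mathcal{S},Q)}=\big\|\mathcal{K}\boldsymbol{\ell}_t\big\|_{\mathbb{H}^{-1}(\mathcal{S},Q)}=\big\|\boldsymbol{\ell}_t\big\|_{\mathbb{H}^1(\mathcal{S},Q)},$$ and $$\lim_{h\downarrow0}\frac1h\big\|\ell^\psi_{t+h}-\ell^\psi_t\big\|_{\mathbb{H}^{-1}(\mathcal{S},Q)}=\big\|\mathcal{K}\psi_t\big\|_{\mathbb{H}^{-1}(\mathcal{S},Q)}=\big\|\psi_t\big\|_{\mathbb{H}^1(\mathcal{S},Q)}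 .$$
   Context: $\nabla f(x,y):=f(y)-f(x)$; $\mathcal{Z}:=\{(x,y):\kappa(x,y)>0\}$, $c(x,y):=\frac12\kappa(x,y)q(x)$, $\|F\|^2_{\mathbb{L}^2(\mathcal{Z},C)}:=\sum_{(x,y)\in\mathcal{Z}}c(x,y)F(x,y)^2$. $\|f\|_{\mathbb{H}^1(\mathcal{S},Q)}:=\|\nabla f\|_{\mathbb{L}^2(\mathcal{Z},C)}$ (equal to $\mathcal{E}(f,f)^{1/2}$, $\mathcal{E}(f,g):=-\sum_yq(y)f(y)(\mathcal{K}g)(y)$). $\|f\|_{\mathbb{H}^{-1}(\mathcal{S},Q)}:=\|\nabla g\|_{\mathbb{L}^2(\mathcal{Z},C)}$ for any $g$ with $\mathcal{K}g=f$ if $f\in\mathrm{Range}(\mathcal{K})$, and $+\infty$ otherwise. *)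

From HB Require Import structures.
From mathcomp Require Import all_boot all_order all_algebra.
From mathcomp Require Import all_classical all_reals all_analysis.
Set Implicit Arguments. Unset Strict Implicit. Unset Printing Implicit Defensive.
Import Order.TTheory GRing.Theory Num.Theory.
Import numFieldNormedType.Exports.
Local Open Scope classical_set_scope.
Local Open Scope ring_scope.

Section Defs.
Variables (R : realType) (S : finType).

Definition stochastic_mx (Pi : S -> S -> R) : Prop :=
  (forall x y, 0 <= Pi x y) /\ (forall x, \sum_y Pi x y = 1).

Fixpoint npow (Pi : S -> S -> R) (n : nat) (x y : S) : R :=
  match n with
  | O => (x == y)%:R
  | m.+1 => \sum_z npow Pi m x z * Pi z y
  end.

Definition irreducible_chain (Pi : S -> S -> R) : Prop :=
  forall x y, exists n : nat, 0 < npow Pi n x y.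

Definition is_distr (q : S -> R) : Prop :=
  (forall y, 0 <= q y) /\ \sum_y q y = 1.

Definition invariant_distr (Pi : S -> S -> R) (q : S -> R) : Prop :=
  forall y, \sum_x q x * Pi x y = q y.

Definition kappa (Pi : S -> S -> R) (x y : S) : R := Pi x y - (x == y)%:R.

Definition Kop (Pi : S -> S -> R) (f : S -> R) : S -> R :=
  fun x => \sum_y kappa Pi x y * f y.

Definition kappa_hat (Pi : S -> S -> R) (q : S -> R) (x y : S) : R :=
  q y * kappa Pi y x / q x.

Definition cZ (Pi : S -> S -> R) (q : S -> R) (x y : S) : R :=
  2^-1 * kappa Pi x y * q x.

(* ||F||_{L^2(Z,C)} with Z = {(x,y) : kappa(x,y) > 0} *)
Definition L2Z (Pi : S -> S -> R) (q : S -> R) (F : S -> S -> R) : R :=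
  Num.sqrt (\sum_x \sum_(y | 0 < kappa Pi x y) cZ Pi q x y * F x y ^+ 2).

Definition grad (f : S -> R) : S -> S -> R := fun x y => f y - f x.

Definition H1norm (Pi : S -> S -> R) (q : S -> R) (f : S -> R) : R :=
  L2Z Pi q (grad f).

Definition Hm1norm (Pi : S -> S -> R) (q : S -> R) (f : S -> R) : \bar R :=
  match pselect (exists g, Kop Pi g = f) with
  | left e => (L2Z Pi q (grad (projT1 (cid e))))%:E
  | right _ => +oo%E
  end.

End Defs.

From HB Require Import structures.
From mathcomp Require Import all_boot all_order all_algebra.
From mathcomp Require Import all_classical all_reals all_analysis.
From mathcomp Require Import ring lra zify.
Set Implicit Arguments. Unset Strict Implicit. Unset Printing Implicit Defensive.
Import Order.TTheory GRing.Theory Num.Theory.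
Import numFieldNormedType.Exports.
Local Open Scope classical_set_scope.
Local Open Scope ring_scope.

(* Irreducibility and the maximum principle make every function [v] with
   [Kop Pi v = 0] constant, so by rank-nullity the range of [Kop Pi] is exactly
   the set of functions of [q]-mean zero.  Hence [Hm1norm (Kop g) = H1norm g],
   and on that range [Kop Pi] has a linear right inverse [Kpinv] (built from
   [pinvmx]).  Detailed balance turns [kappa_hat] into [kappa], so the density
   [p_t / q] and [lpsi] both move with velocity [Kop phi] ([phi] = [p_t / q],
   resp. [psi_t]) while keeping their [q]-mean.  Therefore
   [h^-1 ||u_(t+h) - u_t||_(H^-1) = ||Kpinv (h^-1 (u_(t+h) - u_t))||_(H^1)],
   and continuity of [Kpinv] and of the [H^1] norm gives the limit
   [||Kpinv (Kop phi)||_(H^1) = ||phi||_(H^1)]. *)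

Lemma cvg_sumr (R : realType) (T : Type) (F : set_system T) {FF : Filter F}
    (I : finType) (u : I -> T -> R) (l : I -> R) :
  (forall i, u i t @[t --> F] --> l i) -> \sum_i u i t @[t --> F] --> \sum_i l i.
Proof. by move=> ul; apply: cvg_big => //; exact: add_continuous. Qed.

Section Calculus.
Variable R : realType.

Lemma is_derive_right_diffq (f : R -> R) (t df : R) : is_derive t 1 f df ->
  h^-1 * (f (t + h) - f t) @[h --> 0^'+] --> df.
Proof.
move=> fdf; apply: cvg_dnbhs_at_right; rewrite -(@derive_val _ _ _ _ _ _ _ fdf).
have diffqE h : h^-1 *: ((f \o shift t) (h *: 1) - f t) = h^-1 * (f (t + h) - f t).
  by rewrite /= [_%:A]mulr1 (addrC h t).
by rewrite -(eq_cvg _ _ diffqE); exact: ex_derive.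
Qed.

Lemma diffq_right_cvg_cont (f : R -> R) (t l : R) :
  h^-1 * (f (t + h) - f t) @[h --> 0^'+] --> l -> f (t + h) @[h --> 0^'+] --> f t.
Proof.
move=> fl; apply/subr_cvg0.
have : h * (h^-1 * (f (t + h) - f t)) @[h --> 0^'+] --> 0 * l.
  by apply: cvgM => //; apply: cvg_at_right_filter; exact: cvg_id.
rewrite mul0r; apply: cvg_trans; apply: near_eq_cvg.
by apply: filterS (nbhs_right_gt 0) => h h_gt0; rewrite mulrA mulfV ?gt_eqF // mul1r.
Qed.

Lemma is_derive_sumr (I : finType) (u : I -> R -> R) (du : I -> R) (t : R) :
  (forall i, is_derive t 1 (u i) (du i)) ->
  is_derive t 1 (fun s => \sum_i u i s) (\sum_i du i).
Proof.
move=> udu; rewrite -fct_sumE.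
by elim/big_ind2 : _ => // *; [exact: is_derive_cst | exact: is_deriveD].
Qed.

Lemma derive0_itv_cst (f : R -> R) (a b : R) :
  (forall s, a < s < b -> is_derive s 1 f 0) -> {in `]a, b[ &, forall s s', f s = f s'}.
Proof.
move=> f'0 s s'; rewrite !in_itv /= => /andP[a_s s_b] /andP[a_s' s'_b].
wlog ss' : s s' a_s s_b a_s' s'_b / s <= s'.
  move=> wlog_eq; case: (leP s s') => [|/ltW] ss'; first exact: wlog_eq.
  by apply/esym; exact: wlog_eq.
have f'0_in x : x \in `]s, s'[ -> is_derive x 1 f ((fun=> 0) x).
  rewrite in_itv /= => /andP[sx xs']; apply: f'0.
  by rewrite (lt_trans a_s sx) (lt_trans xs' s'_b).
have cont : {within `[s, s'], continuous f}.
  apply: derivable_within_continuous => x; rewrite in_itv /= => /andP[sx xs'].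
  have x_in : a < x < b by rewrite (lt_le_trans a_s sx) (le_lt_trans xs' s'_b).
  by case: (f'0 x x_in).
have [c _] := MVT_segment ss' f'0_in cont.
by rewrite mul0r => /eqP; rewrite subr_eq0 => /eqP.
Qed.

(* The right continuity at [t] covers the endpoint [t = a]. *)
Lemma right_cst_near (f : R -> R) (a b t : R) :
  {in `]a, b[ &, forall s s', f s = f s'} -> a <= t < b ->
  f (t + h) @[h --> 0^'+] --> f t -> \forall h \near 0^'+, f (t + h) = f t.
Proof.
move=> f_cst /andP[a_t t_b] ft; set c := (t + b) / 2.
have c_in : c \in `]a, b[ by rewrite in_itv /=; apply/andP; split; rewrite /c; lra.
have b_t : 0 < b - t by rewrite subr_gt0.
have near_c : \forall h \near 0^'+, f (t + h) = f c.
  move: (nbhs_right_gt (0 : R)) (nbhs_right_lt b_t); apply: filterS2 => h h_gt0 h_lt.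
  by apply: f_cst c_in; rewrite in_itv /=; apply/andP; split; lra.
have fc : f t = f c by exact: cvg_unique ft (@cvg_near_cst _ _ _ _ _ _ near_c).
by apply: filterS near_c => h ->.
Qed.

Lemma mean_increment_eq0 (S : finType) (w : S -> R) (u du : R -> S -> R)
    (a b t : R) (L : S -> R) :
  (forall s, a < s < b -> forall x, is_derive s 1 (u^~ x) (du s x)) ->
  (forall s, a < s < b -> \sum_x w x * du s x = 0) ->
  a <= t < b ->
  (forall x, h^-1 * (u (t + h) x - u t x) @[h --> 0^'+] --> L x) ->
  \forall h \near 0^'+, \sum_x w x * (u (t + h) x - u t x) = 0.
Proof.
move=> u_du mean_du0 t_in u_diffq.
pose m s := \sum_x w x * u s x.
have m_cst : {in `]a, b[ &, forall s s', m s = m s'}.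
  apply: derive0_itv_cst => s s_in; rewrite -(mean_du0 s s_in).
  by apply: is_derive_sumr => x; apply: is_deriveZ; exact: u_du.
have m_cont : m (t + h) @[h --> 0^'+] --> m t.
  apply: (@diffq_right_cvg_cont _ _ (\sum_x w x * L x)).
  have diffqE h :
      \sum_x w x * (h^-1 * (u (t + h) x - u t x)) = h^-1 * (m (t + h) - m t).
    by rewrite /m -sumrB mulr_sumr; apply: eq_bigr => x _; rewrite -mulrBr mulrCA.
  under eq_cvg do rewrite -diffqE.
  by apply: cvg_sumr => x; apply: cvgM => //; exact: cvg_cst.
apply: filterS (right_cst_near m_cst t_in m_cont) => h mt.
transitivity (m (t + h) - m t); last by rewrite mt subrr.
by rewrite /m -sumrB; apply: eq_bigr => x _; rewrite mulrBr.
Qed.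

End Calculus.

Section Generator.
Variables (R : realType) (S : finType) (Pi : S -> S -> R).
Hypothesis stoch : stochastic_mx Pi.

Lemma npow_ge0 n x y : 0 <= npow Pi n x y.
Proof.
elim: n x y => [|n IHn] x y /=; first exact: ler0n.
by apply: sumr_ge0 => z _; apply: mulr_ge0 => //; case: stoch.
Qed.

Lemma npowS_gt0 n x y : 0 < npow Pi n.+1 x y ->
  exists2 z, 0 < npow Pi n x z & 0 < Pi z y.
Proof.
move=> /= pos.
have /existsP [z hz] : [exists z, 0 < npow Pi n x z * Pi z y].
  apply: contraTT pos; rewrite negb_exists => /forallP none; rewrite -leNgt.
  by apply: sumr_le0 => z _; rewrite leNgt none.
exists z.
- by rewrite lt_def npow_ge0 andbT; apply: contraTneq hz => ->; rewrite mul0r ltxx.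
- by rewrite lt_def (proj1 stoch) andbT; apply: contraTneq hz => ->; rewrite mulr0 ltxx.
Qed.

Lemma kappa_row_sum0 x : \sum_y kappa Pi x y = 0.
Proof.
rewrite /kappa sumrB; case: stoch => _ ->.
rewrite (bigD1 x) //= eqxx big1 ?addr0 ?subrr // => y /negbTE.
by rewrite eq_sym => ->.
Qed.

Lemma KopE v x : Kop Pi v x = \sum_y Pi x y * v y - v x.
Proof.
rewrite /Kop /kappa; under eq_bigr do rewrite mulrBl; rewrite sumrB.
congr (_ - _); rewrite (bigD1 x) //= eqxx mul1r big1 ?addr0 // => y /negbTE.
by rewrite eq_sym => ->; rewrite mul0r.
Qed.

Lemma harmonic_max_eq v z y : (forall x, Kop Pi v x = 0) ->
  (forall w, v w <= v z) -> 0 < Pi z y -> v y = v z.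
Proof.
move=> harm vmax Pzy.
have gap0 : \sum_w Pi z w * (v z - v w) = 0.
  under eq_bigr do rewrite mulrBr.
  by rewrite sumrB -mulr_suml (proj2 stoch) mul1r -opprB -KopE harm oppr0.
have gap_ge0 w : true -> 0 <= Pi z w * (v z - v w).
  by move=> _; rewrite mulr_ge0 ?subr_ge0 //; case: stoch.
move/eqP: (@psumr_eq0P _ _ predT _ gap_ge0 gap0 y isT).
by rewrite mulf_eq0 gt_eqF //= subr_eq0 => /eqP.
Qed.

Hypothesis irr : irreducible_chain Pi.

Lemma harmonic_const v : (forall x, Kop Pi v x = 0) -> forall x y, v x = v y.
Proof.
move=> harm x y; case: (@Order.TotalTheory.arg_maxP _ _ S x predT v isT) => m _ vmax.
suff vm w : v w = v m by rewrite !vm.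
have [n] := irr m w; elim: n w => [|n IHn] w.
  by rewrite /=; case: eqP => [->|]; rewrite ?ltxx.
move=> /npowS_gt0 [z /IHn vz Pzw].
by rewrite (@harmonic_max_eq v z w harm _ Pzw) // => u; rewrite vz; exact: vmax.
Qed.

Lemma npow_invariant q : invariant_distr Pi q ->
  forall n y, \sum_x q x * npow Pi n x y = q y.
Proof.
move=> qinv; elim=> [|n IHn] y /=.
  by rewrite (bigD1 y) //= eqxx mulr1 big1 ?addr0 // => x /negbTE ->; rewrite mulr0.
under eq_bigr do rewrite mulr_sumr; rewrite exchange_big /= -[RHS]qinv.
by apply: eq_bigr => z _; rewrite -IHn mulr_suml; apply: eq_bigr => x _; rewrite mulrA.
Qed.

Lemma invariant_distr_gt0 q : is_distr q -> invariant_distr Pi q -> forall y, 0 < q y.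
Proof.
move=> [q_ge0 q1] qinv y.
have [x qx_gt0] : exists x, 0 < q x.
  apply/not_existsP => q_le0; move: q1; rewrite big1 => [/esym/eqP|x _].
    by rewrite oner_eq0.
  by apply/le_anti; rewrite q_ge0 andbT leNgt; apply/negP/q_le0.
have [n npow_gt0] := irr x y.
rewrite -(npow_invariant qinv n y) (bigD1 x) //= ltr_wpDr ?mulr_gt0 //.
by apply: sumr_ge0 => z _; rewrite mulr_ge0 ?npow_ge0.
Qed.

End Generator.

Lemma sum_enum_val (V : nmodType) (S : finType) (F : S -> V) :
  \sum_(j < #|S|) F (enum_val j) = \sum_x F x.
Proof.
rewrite [RHS](reindex (fun j : 'I_#|S| => enum_val j)) //.
by exists enum_rank => x _; [exact: enum_valK | exact: enum_rankK].
Qed.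

Section FunRow.
Variables (T : Type) (S : finType).

Definition row_of_fun (f : S -> T) : 'rV[T]_#|S| := \row_i f (enum_val i).
Definition fun_of_row (u : 'rV[T]_#|S|) : S -> T := fun x => u 0 (enum_rank x).

Lemma row_of_funK : cancel row_of_fun fun_of_row.
Proof. by move=> f; apply: funext => x; rewrite /fun_of_row mxE enum_rankK. Qed.

Lemma fun_of_rowK : cancel fun_of_row row_of_fun.
Proof. by move=> u; apply/rowP => i; rewrite mxE /fun_of_row enum_valK. Qed.

End FunRow.

Section Range.
Variables (R : realType) (S : finType) (Pi : S -> S -> R).
Hypotheses (stoch : stochastic_mx Pi) (irr : irreducible_chain Pi).

Definition Kmx : 'M[R]_#|S| := \matrix_(i, j) kappa Pi (enum_val j) (enum_val i).

Lemma row_of_Kop g : row_of_fun (Kop Pi g) = row_of_fun g *m Kmx.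
Proof.
apply/rowP => i; rewrite !mxE /Kop -sum_enum_val.
by apply: eq_bigr => j _; rewrite !mxE mulrC.
Qed.

Lemma Kop_fun_of_row u : Kop Pi (fun_of_row u) = fun_of_row (u *m Kmx).
Proof. by rewrite -{2}[u]fun_of_rowK -row_of_Kop row_of_funK. Qed.

Lemma Kop_rangeP f : reflect (exists g, Kop Pi g = f) (row_of_fun f <= Kmx)%MS.
Proof.
apply: (iffP submxP) => [[w fw]|[g <-]]; last by exists (row_of_fun g); rewrite row_of_Kop.
by exists (fun_of_row w); rewrite Kop_fun_of_row -fw row_of_funK.
Qed.

Lemma Kmx_ker_const : (kermx Kmx <= (const_mx 1 : 'rV[R]_#|S|))%MS.
Proof.
apply/row_subP => i; set u := row i (kermx Kmx).
have uK : u *m Kmx = 0 by apply/sub_kermxP; exact: row_sub.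
have harm x : Kop Pi (fun_of_row u) x = 0 by rewrite Kop_fun_of_row uK /fun_of_row mxE.
have [x0 _ | S0] := pickP (@predT S); last first.
  suff -> : u = 0 by exact: sub0mx.
  by apply/rowP => j; have := S0 (enum_val j).
have -> : u = u 0 (enum_rank x0) *: const_mx 1.
  apply/rowP => j; rewrite [RHS]mxE [X in _ * X]mxE mulr1.
  by have := harmonic_const stoch irr harm (enum_val j) x0; rewrite /fun_of_row enum_valK.
exact/scalemx_sub/submx_refl.
Qed.

Lemma Kmx_rank : (#|S| - 1 <= \rank Kmx)%N.
Proof.
have := mxrankS Kmx_ker_const; rewrite mxrank_ker.
have : (\rank (const_mx 1%R : 'rV[R]_#|S|) <= 1)%N by exact: rank_leq_row.
lia.
Qed.

Lemma sum_q_kappa q : invariant_distr Pi q -> forall x, \sum_y q y * kappa Pi y x = 0.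
Proof.
move=> qinv x; rewrite /kappa; under eq_bigr do rewrite mulrBr.
rewrite sumrB qinv (bigD1 x) //= eqxx mulr1 big1 ?addr0 ?subrr // => y /negbTE ->.
by rewrite mulr0.
Qed.

Lemma Kop_range_mean0 q : is_distr q -> invariant_distr Pi q ->
  forall f, \sum_x q x * f x = 0 -> exists g, Kop Pi g = f.
Proof.
(* [q] annihilates both [Kmx] and [f], so adding the row [f] to [Kmx] cannot
   raise its rank [#|S| - 1]. *)
move=> [_ q1] qinv f mean0; apply/Kop_rangeP.
set qc := (row_of_fun q)^T; set B := col_mx Kmx (row_of_fun f).
have Bq : B *m qc = 0.
  rewrite mul_col_mx; apply/eqP; rewrite col_mx_eq0; apply/andP; split; apply/eqP.
    apply/colP => i; rewrite [RHS]mxE -[RHS](sum_q_kappa qinv (enum_val i)).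
    rewrite -sum_enum_val mxE.
    by apply: eq_bigr => j _; rewrite !mxE mulrC.
  apply/rowP => i; rewrite !mxE -[RHS]mean0 -[RHS]sum_enum_val.
  by apply: eq_bigr => j _; rewrite !mxE mulrC.
have qc_neq0 : qc^T != 0.
  rewrite trmxK; apply/eqP => q0.
  have qx x : q x = 0 by rewrite -[q]row_of_funK q0 /fun_of_row mxE.
  by move: q1; rewrite big1 // => /esym/eqP; rewrite oner_eq0.
have rankB : (\rank B <= #|S| - 1)%N.
  have : (qc^T <= kermx B^T)%MS by apply/sub_kermxP; rewrite -trmx_mul Bq trmx0.
  by move/mxrankS; rewrite mxrank_ker rank_rV qc_neq0 mxrank_tr; lia.
have KB : (Kmx <= B)%MS by rewrite -addsmxE addsmxSl.
have BK : (B <= Kmx)%MS.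
  rewrite -(mxrank_leqif_sup KB).2 eqn_leq (mxrankS KB) /=.
  exact: leq_trans rankB Kmx_rank.
by move: BK; rewrite col_mx_sub => /andP[].
Qed.

End Range.

Section PseudoInverse.
Variables (R : realType) (S : finType) (Pi : S -> S -> R).

Definition Kpinv (f : S -> R) : S -> R := fun_of_row (row_of_fun f *m pinvmx (Kmx Pi)).

Lemma KopKpinv f : (exists g, Kop Pi g = f) -> Kop Pi (Kpinv f) = f.
Proof. by move=> /Kop_rangeP fK; rewrite Kop_fun_of_row mulmxKpV // row_of_funK. Qed.

Lemma KpinvE f y : Kpinv f y = \sum_x f x * pinvmx (Kmx Pi) (enum_rank x) (enum_rank y).
Proof.
rewrite /Kpinv /fun_of_row mxE -[RHS]sum_enum_val.
by apply: eq_bigr => j _; rewrite mxE enum_valK.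
Qed.

Lemma KpinvZ a f : Kpinv (fun x => a * f x) = fun x => a * Kpinv f x.
Proof.
apply: funext => y; rewrite !KpinvE mulr_sumr.
by apply: eq_bigr => x _; rewrite mulrA.
Qed.

Lemma Kpinv_cvg (T : Type) (F : set_system T) {FF : Filter F} (u : T -> S -> R) f :
  (forall x, u t x @[t --> F] --> f x) -> forall y, Kpinv (u t) y @[t --> F] --> Kpinv f y.
Proof.
move=> uf y; rewrite KpinvE; under eq_cvg do rewrite KpinvE.
by apply: cvg_sumr => x; apply: cvgM => //; exact: cvg_cst.
Qed.

End PseudoInverse.

Section Norms.
Variables (R : realType) (S : finType) (Pi : S -> S -> R) (q : S -> R).

Lemma H1normZ a g : H1norm Pi q (fun x => a * g x) = `|a| * H1norm Pi q g.
Proof.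
rewrite /H1norm /L2Z /grad -sqrtr_sqr -sqrtrM ?sqr_ge0 // mulr_sumr.
congr Num.sqrt; apply: eq_bigr => x _; rewrite mulr_sumr; apply: eq_bigr => y _.
by rewrite -mulrBr exprMn mulrCA.
Qed.

Lemma H1norm_cvg (T : Type) (F : set_system T) {FF : Filter F} (u : T -> S -> R) f :
  (forall x, u t x @[t --> F] --> f x) -> H1norm Pi q (u t) @[t --> F] --> H1norm Pi q f.
Proof.
move=> uf; apply: (continuous_cvg _ (@sqrt_continuous R _)).
apply: cvg_sumr => x; apply: cvg_big => [|y _]; first exact: add_continuous.
by apply: cvgM; [exact: cvg_cst | rewrite expr2; apply: cvgM; apply: cvgB].
Qed.

Hypotheses (stoch : stochastic_mx Pi) (irr : irreducible_chain Pi).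

Lemma grad_Kop_eq g g' : Kop Pi g = Kop Pi g' -> grad g = grad g'.
Proof.
move=> gg'; have harm x : Kop Pi (fun y => g y - g' y) x = 0.
  rewrite /Kop; under eq_bigr do rewrite mulrBr.
  by rewrite sumrB -/(Kop Pi g x) -/(Kop Pi g' x) gg' subrr.
apply: funext => x; apply: funext => y; rewrite /grad.
by have := harmonic_const stoch irr harm y x; lra.
Qed.

Lemma Hm1norm_Kop g : Hm1norm Pi q (Kop Pi g) = (H1norm Pi q g)%:E.
Proof.
rewrite /Hm1norm; case: pselect => [e|]; last by case; exists g.
by case: cid => g0 /= /grad_Kop_eq g0g; rewrite /H1norm g0g.
Qed.

Hypotheses (qd : is_distr q) (qinv : invariant_distr Pi q).

Lemma Hm1norm_diffq_cvg (u : R -> S -> R) t phi :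
  (forall x, h^-1 * (u (t + h) x - u t x) @[h --> 0^'+] --> Kop Pi phi x) ->
  (\forall h \near 0^'+, \sum_x q x * (u (t + h) x - u t x) = 0) ->
  ((h^-1)%:E * Hm1norm Pi q (fun x => u (t + h) x - u t x)%R)%E @[h --> 0^'+]
    --> Hm1norm Pi q (Kop Pi phi).
Proof.
move=> du mean0.
have phiK : Kop Pi (Kpinv Pi (Kop Pi phi)) = Kop Pi phi by apply: KopKpinv; exists phi.
rewrite -phiK Hm1norm_Kop.
apply: (@cvg_trans _
  ((H1norm Pi q (Kpinv Pi (fun x => h^-1 * (u (t + h) x - u t x))))%:E @[h --> 0^'+])).
  apply: near_eq_cvg; move: (nbhs_right_gt (0 : R)) mean0; apply: filterS2 => h h_gt0 /=.
  move=> /(Kop_range_mean0 stoch irr qd qinv)/KopKpinv <-.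
  by rewrite Hm1norm_Kop KpinvZ H1normZ gtr0_norm ?invr_gt0 // EFinM.
apply: cvg_EFin; first exact: filterE.
apply: (H1norm_cvg (u := fun h => Kpinv Pi (fun x => h^-1 * (u (t + h) x - u t x)))).
exact: Kpinv_cvg du.
Qed.

End Norms.

Section Flows.
Variables (R : realType) (S : finType) (Pi : S -> S -> R) (q : S -> R).
Hypotheses (stoch : stochastic_mx Pi) (q_neq0 : forall x, q x != 0).
Hypothesis balance : forall y z, q y * kappa Pi y z = q z * kappa Pi z y.

Lemma q_kappa_hat x y : q x * kappa_hat Pi q x y = q y * kappa Pi y x.
Proof. by rewrite /kappa_hat mulrCA divff ?mulr1. Qed.

Lemma kappa_hatE x y : kappa_hat Pi q x y = kappa Pi x y.
Proof. by rewrite /kappa_hat balance mulrAC divff ?mul1r. Qed.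

Lemma Kop_density (p : S -> R) x :
  Kop Pi (fun y => p y / q y) x = (\sum_y p y * kappa Pi y x) / q x.
Proof.
rewrite /Kop mulr_suml; apply: eq_bigr => y _.
by rewrite -kappa_hatE /kappa_hat; field; rewrite !q_neq0.
Qed.

Section Density.
Variable p : R -> S -> R.
Hypothesis forward : forall (t : R) y, 0 < t ->
  is_derive t 1 (fun s => p s y) (\sum_x p t x * kappa Pi x y).

Lemma density_diffq_cvg (t : R) : 0 < t -> forall x,
  h^-1 * (p (t + h) x / q x - p t x / q x) @[h --> 0^'+]
    --> Kop Pi (fun y => p t y / q y) x.
Proof.
move=> t_gt0 x; rewrite Kop_density.
under eq_cvg do rewrite -mulrBl mulrA.
by apply: cvgM; [exact: is_derive_right_diffq (forward x t_gt0) | exact: cvg_cst].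
Qed.

Lemma density_mean_increment0 (t : R) : 0 < t ->
  \forall h \near 0^'+, \sum_x q x * (p (t + h) x / q x - p t x / q x) = 0.
Proof.
move=> t_gt0.
have mass_cst : \forall h \near 0^'+, \sum_x 1 * (p (t + h) x - p t x) = 0.
  apply: (@mean_increment_eq0 _ _ _ _ (fun s y => \sum_x p s x * kappa Pi x y) 0 (t + 1)).
  - by move=> s /andP[s_gt0 _] y; exact: forward.
  - move=> s _; under eq_bigr do rewrite mul1r; rewrite exchange_big /=.
    by apply: big1 => x _; rewrite -mulr_sumr kappa_row_sum0 ?mulr0.
  - by rewrite ltW //= ltrDl.
  - by move=> x; exact: is_derive_right_diffq (forward x t_gt0).
apply: filterS mass_cst => h mass; rewrite -[RHS]mass; apply: eq_bigr => x _.
by rewrite -mulrBl mul1r mulrCA divff ?mulr1.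
Qed.

End Density.

Section LpsiFlow.
Variables (psi lpsi : R -> S -> R) (t0 eps : R).
Hypothesis lpsi_flow0 : forall x, h^-1 * (lpsi (t0 + h) x - lpsi t0 x) @[h --> 0^'+]
  --> \sum_y kappa_hat Pi q x y * psi t0 y.
Hypothesis lpsi_flow : forall (t : R) x, t0 < t < t0 + eps ->
  is_derive t 1 (fun s => lpsi s x) (\sum_y kappa_hat Pi q x y * psi t y).

Lemma lpsi_diffq_cvg (t : R) : t0 <= t < t0 + eps -> forall x,
  h^-1 * (lpsi (t + h) x - lpsi t x) @[h --> 0^'+] --> Kop Pi (psi t) x.
Proof.
move=> /andP[t0_t t_lt] x.
have -> : Kop Pi (psi t) x = \sum_y kappa_hat Pi q x y * psi t y.
  by apply: eq_bigr => y _; rewrite kappa_hatE.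
have [<-|t0_lt] := eqVneq t0 t; first exact: lpsi_flow0.
have t_in : t0 < t < t0 + eps by rewrite lt_neqAle t0_lt t0_t.
exact: is_derive_right_diffq (lpsi_flow x t_in).
Qed.

Lemma lpsi_mean_increment0 (t : R) : t0 <= t < t0 + eps ->
  \forall h \near 0^'+, \sum_x q x * (lpsi (t + h) x - lpsi t x) = 0.
Proof.
move=> t_in; apply: (mean_increment_eq0 _ _ t_in) => [s s_in x|s _|x].
- exact: lpsi_flow.
- under eq_bigr do rewrite mulr_sumr; rewrite exchange_big /=.
  apply: big1 => y _; transitivity (q y * (\sum_x kappa Pi y x) * psi s y).
    by rewrite mulr_sumr mulr_suml; apply: eq_bigr => x _; rewrite mulrA q_kappa_hat.
  by rewrite kappa_row_sum0 // mulr0 mul0r.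
- exact: (lpsi_diffq_cvg t_in (x := x)).
Qed.

End LpsiFlow.

End Flows.

Theorem proposition6p5 (R : realType) (S : finType)
  (Pi : S -> S -> R) (q : S -> R) (p0 : S -> R) (p : R -> S -> R)
  (t0 eps : R) (psi : R -> S -> R) (lpsi : R -> S -> R) :
  stochastic_mx Pi -> irreducible_chain Pi ->
  is_distr q -> invariant_distr Pi q ->
  (forall y z, q y * kappa Pi y z = q z * kappa Pi z y) ->
  (* positive initial distribution *)
  (forall y, 0 < p0 y) -> \sum_y p0 y = 1 ->
  (* p(t,.) = law at time t of the chain with generator K started from p0:
     forward Kolmogorov equation with initial condition p0 *)
  (forall y, p 0 y = p0 y) ->
  (forall y, p t y @[t --> 0^'+] --> p0 y) ->
  (forall (t : R) (y : S), 0 < t ->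
     is_derive t 1 (fun s => p s y) (\sum_x p t x * kappa Pi x y)) ->
  0 < t0 -> 0 < eps ->
  (* continuous curve psi on [t0, t0 + eps) *)
  (forall x, {within `[t0, t0 + eps[%classic, continuous (fun t => psi t x)}) ->
  (* l^psi solves the ODE on [t0, t0+eps) with l^psi_{t0} = l_{t0} *)
  (forall x, lpsi t0 x = p t0 x / q x) ->
  (forall x, (h^-1 * (lpsi (t0 + h) x - lpsi t0 x)) @[h --> 0^'+] -->
             \sum_y kappa_hat Pi q x y * psi t0 y) ->
  (forall (t : R) (x : S), t0 < t < t0 + eps ->
     is_derive t 1 (fun s => lpsi s x) (\sum_y kappa_hat Pi q x y * psi t y)) ->
  forall t : R, t0 <= t < t0 + eps ->
    let ell := fun s y => p s y / q y in
    ((((h^-1)%:E * Hm1norm Pi q (fun y => ell (t + h) y - ell t y)%R)%E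
        @[h --> 0^'+] --> Hm1norm Pi q (Kop Pi (ell t)))
     /\ Hm1norm Pi q (Kop Pi (ell t)) = (H1norm Pi q (ell t))%:E)
    /\
    ((((h^-1)%:E * Hm1norm Pi q (fun y => lpsi (t + h) y - lpsi t y)%R)%E
        @[h --> 0^'+] --> Hm1norm Pi q (Kop Pi (psi t)))
     /\ Hm1norm Pi q (Kop Pi (psi t)) = (H1norm Pi q (psi t))%:E).
Proof.
(* Neither the initial law [p0], nor the continuity of [psi], nor the value of
   [lpsi] at [t0] is needed: only the two evolution equations enter. *)
move=> stoch irr qd qinv balance _ _ _ _ forward t0_gt0 _ _ _ lpsi_flow0 lpsi_flow t t_in ell.
rewrite /ell.
have q_neq0 x : q x != 0 by rewrite gt_eqF // (invariant_distr_gt0 stoch irr qd qinv).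
have t_gt0 : 0 < t by case/andP: t_in => t0_t _; exact: lt_le_trans t0_t.
have Hm1norm_rate := Hm1norm_diffq_cvg stoch irr qd qinv.
split; split; [| exact: Hm1norm_Kop | | exact: Hm1norm_Kop].
  apply: (Hm1norm_rate (fun s y => p s y / q y)).
    by move=> x; exact: (density_diffq_cvg q_neq0 balance forward t_gt0 (x := x)).
  exact (density_mean_increment0 stoch q_neq0 forward t_gt0).
apply: (Hm1norm_rate lpsi).
  by move=> x; exact: (lpsi_diffq_cvg q_neq0 balance lpsi_flow0 lpsi_flow t_in (x := x)).
exact (lpsi_mean_increment0 stoch q_neq0 balance lpsi_flow0 lpsi_flow t_in).
Qed.
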